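(* Consider a Markov coding game and the MEME sender policy constructed from an MDP policy $\pi$ (as described in the context). Fix a time $t$, a history $h^t=(s^0,a^0,\dots,s^t)$ and the corresponding posterior $b^t$ over messages. For a decision rule $\sigma:\mathcal{M}\to\Delta(\mathcal{A})$, let $M\sim b^t$, $A^t\sim\sigma(M)$, $S^{t+1}\sim\mathcal{T}(s^t,A^t)$, and $H^{t+1}=(h^t,A^t,S^{t+1})$. Among all decision rules $\sigma$ satisfying the marginal constraint $\sum_{m} b^t(m)\sigma(m)(a)=\pi(s^t)(a)$ for all $a\in\mathcal{A}$, the MEME decision rule $\sigma(m)=\nu(A\mid M=m)$ with $\nu=\mathrm{MEC}(b^t,\pi(s^t))$ maximizes the mutual information $\mathcal{I}(M;H^{t+1}\mid b^t,h^t)$.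
   Context: A (finite, episodic) Markov decision process is $\langle \mathcal{S},\mathcal{A},\mathcal{R},\mathcal{T}\rangle$ with finite state set $\mathcal{S}$, finite action set $\mathcal{A}$, reward $\mathcal{R}:\mathcal{S}\times\mathcal{A}\to\mathbb{R}$ and transition function $\mathcal{T}:\mathcal{S}\times\mathcal{A}\to\Delta(\mathcal{S})$. A Markov coding game (MCG) is $\langle(\mathcal{S},\mathcal{A},\mathcal{T},\mathcal{R}),\mathcal{M},\mu,\zeta\rangle$ where $\mathcal{M}$ is a finite message set, $\mu\in\Delta(\mathcal{M})$ is the prior, and $\zeta\ge 0$. A message $M\sim\mu$ is revealed to the sender, who plays the MDP with a message-conditional policy, producing a trajectory observed by the receiver. A minimum entropy coupling $\mathrm{MEC}(p,q)$ of distributions $p\in\Delta(\mathcal{M})$ and $q\in\Delta(\mathcal{A})$ is a joint distribution $\nu$ on $\mathcal{M}\times\mathcal{A}$ whose marginals are $p$ and $q$ and whose joint entropy $\mathcal{H}(M,A)$ is minimal among all such joint distributions. MEME sender: given an MDP policy $\pi:\mathcal{S}\to\Delta(\mathcal{A})$, set $b^0=\mu$; at time $t$ in state $s^t$ with current posterior $b^t=\mathcal{P}(M\mid h^t,\pi_{\mid M}^{:t})$ over the message given the history and the sender's past policy, compute $\nu=\mathrm{MEC}(b^t,\pi(s^t))$ and act according to $\pi_{\mid M}(s^t,m)=\nu(A\mid M=m)$; the posterior is then updated by Bayes' rule. Mutual information is $\mathcal{I}(X;Y)=\mathcal{H}(X)-\mathcal{H}(X\mid Y)$ with $\mathcal{H}$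 the Shannon entropy. *)

From HB Require Import structures.
From mathcomp Require Import all_boot all_order all_algebra.
From mathcomp Require Import reals exp.
Set Implicit Arguments. Unset Strict Implicit. Unset Printing Implicit Defensive.
Import Order.TTheory GRing.Theory Num.Theory.
Local Open Scope ring_scope.

Section Defs.
Variable R : realType.

Definition is_dist (T : finType) (p : T -> R) : Prop :=
  (forall x, 0 <= p x) /\ \sum_x p x = 1.

(* Shannon entropy (natural log; 0 ln 0 = 0 since ln 0 = 0 in the library) *)
Definition entropy (T : finType) (p : T -> R) : R :=
  - \sum_x p x * ln (p x).

Definition marg1 (X Y : finType) (j : X * Y -> R) (x : X) : R := \sum_y j (x, y).
Definition marg2 (X Y : finType) (j : X * Y -> R) (y : Y) : R := \sum_x j (x, y).

Definition cond_entropy (X Y : finType) (j : X * Y -> R) : R :=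
  - \sum_xy j xy * ln (j xy / marg2 j xy.2).

Definition mutual_info (X Y : finType) (j : X * Y -> R) : R :=
  entropy (marg1 j) - cond_entropy j.

Definition is_coupling (X Y : finType) (p : X -> R) (q : Y -> R) (nu : X * Y -> R) : Prop :=
  is_dist nu /\ (forall x, marg1 nu x = p x) /\ (forall y, marg2 nu y = q y).

Definition is_MEC (X Y : finType) (p : X -> R) (q : Y -> R) (nu : X * Y -> R) : Prop :=
  is_coupling p q nu /\ forall nu', is_coupling p q nu' -> entropy nu <= entropy nu'.

Definition decision_rule (M A : finType) (sigma : M -> A -> R) : Prop :=
  forall m, is_dist (sigma m).

Definition marginal_constraint (M A : finType) (b : M -> R) (sigma : M -> A -> R)
  (q : A -> R) : Prop :=
  forall a, \sum_m b m * sigma m a = q a.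

(* MEME decision rule: sigma(m) = nu(A | M = m); when b m = 0 the conditional
   is undefined and we (arbitrarily) use q *)
Definition meme_rule (M A : finType) (b : M -> R) (q : A -> R) (nu : M * A -> R)
  (m : M) (a : A) : R :=
  if b m == 0 then q a else nu (m, a) / b m.

(* joint law of (M, (A^t, S^{t+1})) given current state s and posterior b *)
Definition joint_next (M A S : finType) (b : M -> R) (sigma : M -> A -> R)
  (T : S -> A -> S -> R) (s : S) (x : M * (A * S)) : R :=
  b x.1 * sigma x.1 x.2.1 * T s x.2.1 x.2.2.

End Defs.

From HB Require Import structures.
From mathcomp Require Import all_boot all_order all_algebra.
From mathcomp Require Import reals exp.
From mathcomp Require Import lra.
Set Implicit Arguments. Unset Strict Implicit. Unset Printing Implicit Defensive.
Import Order.TTheory GRing.Theory Num.Theory.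
Local Open Scope ring_scope.

(* The next state S' depends on the message M only through the action A, so
   H(M | A, S') = H(M | A) and I(M; A, S') = H(M) + H(A) - H(M, A).  Under the
   marginal constraint H(M) = H(b) and H(A) = H(pi s) are fixed, and the joint
   law of (M, A) is a coupling of b and pi s; maximizing the mutual information
   thus amounts to minimizing the joint entropy over couplings, and the joint
   law induced by the MEME rule is the minimum entropy coupling itself. *)

Section EntropyFacts.
Variable R : realType.

Lemma sumr_pair (X Y : finType) (F : X * Y -> R) :
  \sum_(p : X * Y) F p = \sum_x \sum_y F (x, y).
Proof. by rewrite pair_big; apply: eq_bigr => -[x y] _. Qed.

Lemma eq_entropy (X : finType) (f g : X -> R) : f =1 g -> entropy f = entropy g.
Proof. by move=> fg; rewrite /entropy; under eq_bigr do rewrite fg. Qed.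

Lemma mul_ln_divMr (c q t : R) :
  (c * t) * ln ((c * t) / (q * t)) = t * (c * ln (c / q)).
Proof.
have [->|t0] := eqVneq t 0; first by rewrite !mulr0 !mul0r.
by rewrite invfM mulrACA divff // mulr1 [c * t]mulrC -mulrA.
Qed.

Lemma mul_ln_div (c q : R) : 0 <= c <= q -> c * ln (c / q) = c * ln c - c * ln q.
Proof.
case/andP=> c_ge0 c_le_q; have [->|c_neq0] := eqVneq c 0; first by rewrite !mul0r subr0.
have c_gt0 : 0 < c by rewrite lt_def c_neq0.
have q_gt0 : 0 < q by apply: lt_le_trans c_le_q.
by rewrite lnM ?posrE ?invr_gt0 // lnV ?posrE // mulrDr mulrN.
Qed.

End EntropyFacts.

Definition rule_joint (R : realType) (M A : finType) (b : M -> R)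
    (sigma : M -> A -> R) (x : M * A) : R :=
  b x.1 * sigma x.1 x.2.

Section DecisionRule.
Variables (R : realType) (M A : finType) (b : M -> R) (sigma : M -> A -> R) (q : A -> R).
Hypothesis b_ge0 : forall m, 0 <= b m.
Hypothesis sigma_rule : decision_rule sigma.
Hypothesis sigma_marg : marginal_constraint b sigma q.

Lemma rule_joint_le_marg2 m a : 0 <= rule_joint b sigma (m, a) <= q a.
Proof.
have ge0 i : 0 <= b i * sigma i a by rewrite mulr_ge0 // (sigma_rule i).1.
rewrite ge0 -(sigma_marg a) (bigD1 m) //= lerDl.
by apply: sumr_ge0 => i _.
Qed.

Lemma rule_joint_coupling : \sum_m b m = 1 -> is_coupling b q (rule_joint b sigma).
Proof.
move=> b_sum1; have marg1_joint m : marg1 (rule_joint b sigma) m = b m.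
  by rewrite /marg1 /rule_joint /= -mulr_sumr (sigma_rule m).2 mulr1.
split; [split|split=> //].
- by move=> [m a]; case/andP: (rule_joint_le_marg2 m a).
- by rewrite sumr_pair -b_sum1; apply: eq_bigr => m _; apply: marg1_joint.
Qed.

Variables (S : finType) (T : S -> A -> S -> R) (s : S).
Hypothesis T_dist : forall a, is_dist (T s a).

Lemma marg1_joint_next : marg1 (joint_next b sigma T s) =1 b.
Proof.
move=> m; rewrite /marg1 sumr_pair /joint_next /=.
under eq_bigr => a _ do rewrite -mulr_sumr (T_dist a).2 mulr1.
by rewrite -mulr_sumr (sigma_rule m).2 mulr1.
Qed.

Lemma marg2_joint_next a s' : marg2 (joint_next b sigma T s) (a, s') = q a * T s a s'.
Proof. by rewrite /marg2 /joint_next /= -mulr_suml sigma_marg. Qed.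

(* The channel factor T s a s' cancels inside the logarithm and sums out. *)
Lemma cond_entropy_joint_next : cond_entropy (joint_next b sigma T s) =
  - \sum_m \sum_a rule_joint b sigma (m, a) * ln (rule_joint b sigma (m, a) / q a).
Proof.
rewrite /cond_entropy sumr_pair; congr (- _); apply: eq_bigr => m _.
rewrite sumr_pair; apply: eq_bigr => a _.
under eq_bigr => s' _ do rewrite marg2_joint_next /joint_next /= mul_ln_divMr.
by rewrite -mulr_suml (T_dist a).2 mul1r.
Qed.

Lemma mutual_info_joint_next : mutual_info (joint_next b sigma T s) =
  entropy b + entropy q - entropy (rule_joint b sigma).
Proof.
rewrite /mutual_info (eq_entropy marg1_joint_next) cond_entropy_joint_next.
under eq_bigr => m _ do under eq_bigr => a _ do
  rewrite mul_ln_div ?rule_joint_le_marg2 //.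
have cross_term : \sum_m \sum_a rule_joint b sigma (m, a) * ln (q a) =
    \sum_a q a * ln (q a).
  by rewrite exchange_big; apply: eq_bigr => a _; rewrite -mulr_suml sigma_marg.
under eq_bigr => m _ do rewrite sumrB.
rewrite sumrB cross_term /entropy sumr_pair.
lra.
Qed.

End DecisionRule.

Section MemeRule.
Variables (R : realType) (M A : finType) (b : M -> R) (q : A -> R) (nu : M * A -> R).
Hypothesis nu_coupling : is_coupling b q nu.

Lemma coupling_eq0 m a : b m = 0 -> nu (m, a) = 0.
Proof.
have [[nu_ge0 _] [nu_marg1 _]] := nu_coupling.
move=> bm0; have := nu_marg1 m; rewrite /marg1 bm0 => /psumr_eq0P nu_m0.
exact: nu_m0.
Qed.

Lemma rule_joint_meme : rule_joint b (meme_rule b q nu) =1 nu.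
Proof.
move=> [m a]; rewrite /rule_joint /meme_rule /=.
have [bm0|bm_neq0] := eqVneq (b m) 0; first by rewrite bm0 mul0r coupling_eq0.
by rewrite mulrC divfK.
Qed.

Lemma meme_rule_marginal : marginal_constraint b (meme_rule b q nu) q.
Proof.
move=> a; rewrite -(nu_coupling.2.2 a) /marg2.
by apply: eq_bigr => m _; apply: (rule_joint_meme (m, a)).
Qed.

(* Rows with b m = 0 fall back on q, which is why q must be a distribution. *)
Lemma meme_rule_decision : is_dist q -> decision_rule (meme_rule b q nu).
Proof.
have [[nu_ge0 _] [nu_marg1 _]] := nu_coupling.
move=> q_dist m; rewrite /meme_rule; have [//|bm_neq0] := eqVneq (b m) 0.
have bm_gt0 : 0 < b m by rewrite lt_def bm_neq0 -(nu_marg1 m) sumr_ge0.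
split=> [a|]; first by rewrite divr_ge0 // ltW.
by rewrite -mulr_suml -/(marg1 nu m) nu_marg1 divff.
Qed.

End MemeRule.

Theorem proposition3 (R : realType) (M A S : finType)
  (T : S -> A -> S -> R) (hT : forall s a, is_dist (T s a))
  (pi : S -> A -> R) (hpi : forall s, is_dist (pi s))
  (s : S) (b : M -> R) (hb : is_dist b)
  (nu : M * A -> R) (hnu : is_MEC b (pi s) nu) :
  decision_rule (meme_rule b (pi s) nu) /\
  marginal_constraint b (meme_rule b (pi s) nu) (pi s) /\
  (forall sigma : M -> A -> R, decision_rule sigma ->
     marginal_constraint b sigma (pi s) ->
     mutual_info (joint_next b sigma T s)
       <= mutual_info (joint_next b (meme_rule b (pi s) nu) T s)).
Proof.
have [nu_coupling nu_min] := hnu.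
have meme_dec := meme_rule_decision nu_coupling (hpi s).
have meme_marg := meme_rule_marginal nu_coupling.
split=> //; split=> // sigma sigma_dec sigma_marg.
rewrite (mutual_info_joint_next hb.1 sigma_dec sigma_marg (hT s)).
rewrite (mutual_info_joint_next hb.1 meme_dec meme_marg (hT s)).
rewrite (eq_entropy (rule_joint_meme nu_coupling)) lerD2l lerN2.
exact: nu_min (rule_joint_coupling hb.1 sigma_dec sigma_marg hb.2).
Qed.
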